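(* The map $\mathfrak q:S^2\times S^1\to S^3$, $\mathfrak q(x,z)=u^{-1}zu$ for any $u\in S^3$ with $x=u^{-1}\mathbf iu$, has degree two.
   Context: $S^3$ is the group of unit quaternions, $S^2$ the unit purely imaginary quaternions, $S^1=\{a+b\mathbf i:a^2+b^2=1\}\subset S^3$; $\mathfrak q$ is well defined since $u$ is determined by $x$ up to left multiplication by elements of $S^1$, which commute with $z$. Orientations: $\mathbb H\cong\mathbb C^2$ via $(z,w)\mapsto z+w\mathbf j$ with complex orientation $dq^0\wedge dq^1\wedge dq^2\wedge dq^3$, spheres oriented as boundaries (outer normal first), with normalized volume forms $\omega_{S^1}=\frac1{2\pi\mathbf i}z^{-1}dz$, $\omega_{S^2}=-\frac1{8\pi}x\,dx\wedge dx$, $\omega_{S^3}=-\frac1{12\pi^2}\mathrm{Re}((q^{-1}dq)^{\wedge3})$; $S^2\times S^1$ carries the product orientation, so the degree is $\int_{S^2\times S^1}\mathfrak q^*\omega_{S^3}$ with $\omega_{S^2}\wedge\omega_{S^1}$ positive. *)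

From Stdlib Require Import Reals.
From Coquelicot Require Import Coquelicot.
Open Scope R_scope.

Record quat := Q { q0 : R; q1 : R; q2 : R; q3 : R }.

Definition qadd (p q : quat) : quat :=
  Q (q0 p + q0 q) (q1 p + q1 q) (q2 p + q2 q) (q3 p + q3 q).
Definition qscale (r : R) (q : quat) : quat :=
  Q (r * q0 q) (r * q1 q) (r * q2 q) (r * q3 q).
Definition qopp (q : quat) : quat := qscale (-1) q.

Definition qmul (p q : quat) : quat :=
  Q (q0 p * q0 q - q1 p * q1 q - q2 p * q2 q - q3 p * q3 q)
    (q0 p * q1 q + q1 p * q0 q + q2 p * q3 q - q3 p * q2 q)
    (q0 p * q2 q - q1 p * q3 q + q2 p * q0 q + q3 p * q1 q)
    (q0 p * q3 q + q1 p * q2 q - q2 p * q1 q + q3 p * q0 q).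

Definition qconj (q : quat) : quat := Q (q0 q) (- q1 q) (- q2 q) (- q3 q).
Definition qnorm2 (q : quat) : R :=
  q0 q * q0 q + q1 q * q1 q + q2 q * q2 q + q3 q * q3 q.
Definition qinv (q : quat) : quat := qscale (/ qnorm2 q) (qconj q).
Definition qRe (q : quat) : R := q0 q.

Definition qone : quat := Q 1 0 0 0.
Definition qi : quat := Q 0 1 0 0.

Definition in_S3 (q : quat) : Prop := qnorm2 q = 1.
Definition in_S2 (x : quat) : Prop := q0 x = 0 /\ qnorm2 x = 1.
Definition in_S1 (z : quat) : Prop := q2 z = 0 /\ q3 z = 0 /\ qnorm2 z = 1.

(** Normalized volume forms, evaluated on tangent vectors (as in the paper):
    omega_S1 = (1/(2 pi i)) z^{-1} dz,
    omega_S2 = -(1/(8 pi)) x dx /\ dx,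
    omega_S3 = -(1/(12 pi^2)) Re((q^{-1} dq)^{/\ 3}),
    with the wedge of (quaternion-valued) 1-forms
    (a /\ b /\ c)(v1,v2,v3) = sum_sigma sgn(sigma) a(v_s1) b(v_s2) c(v_s3). *)
Definition omega_S1 (z v : quat) : R :=
  (* 1/(2 pi i) * w = (1/(2 pi)) * (-i) * w ; real for tangent v *)
  qRe (qscale (/ (2 * PI)) (qmul (qopp qi) (qmul (qinv z) v))).

Definition omega_S2 (x v w : quat) : R :=
  qRe (qscale (- / (8 * PI)) (qadd (qmul x (qmul v w)) (qopp (qmul x (qmul w v))))).

Definition triple (a b c : quat) : quat := qmul a (qmul b c).

Definition omega_S3 (q v1 v2 v3 : quat) : R :=
  let a1 := qmul (qinv q) v1 in
  let a2 := qmul (qinv q) v2 in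
  let a3 := qmul (qinv q) v3 in
  - / (12 * PI ^ 2) *
  (qRe (triple a1 a2 a3) + qRe (triple a2 a3 a1) + qRe (triple a3 a1 a2)
   - qRe (triple a1 a3 a2) - qRe (triple a2 a1 a3) - qRe (triple a3 a2 a1)).

Definition qderive (g : R -> quat) (s : R) : quat :=
  Q (Derive (fun s => q0 (g s)) s) (Derive (fun s => q1 (g s)) s)
    (Derive (fun s => q2 (g s)) s) (Derive (fun s => q3 (g s)) s).

(** A parametrization of S^2 x S^1 by (theta, phi, t) in [0,pi]x[0,2pi]x[0,2pi],
    bijective off a null set: spherical coordinates on S^2 (in the imaginary
    quaternions, with i as polar axis) and z = cos t + i sin t on S^1. *)
Definition sph (th ph : R) : quat :=
  Q 0 (cos th) (sin th * cos ph) (sin th * sin ph).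
Definition circ (t : R) : quat := Q (cos t) (sin t) 0 0.

Definition sgnR (r : R) : R :=
  if Rlt_dec 0 r then 1 else if Rlt_dec r 0 then -1 else 0.

(** Integrand of f^* omega_S3 in the chart, times the sign of the chart
    orientation with respect to the product orientation omega_S2 /\ omega_S1. *)
Definition pullback_density (f : quat -> quat -> quat) (th ph t : R) : R :=
  let x := sph th ph in
  let z := circ t in
  let dth_x := qderive (fun s => sph s ph) th in
  let dph_x := qderive (fun s => sph th s) ph in
  let dt_z := qderive circ t in
  let F := fun th ph t => f (sph th ph) (circ t) in
  omega_S3 (F th ph t)
    (qderive (fun s => F s ph t) th)
    (qderive (fun s => F th s t) ph)
    (qderive (fun s => F th ph s) t)
  * sgnR (omega_S2 x dth_x dph_x * omega_S1 z dt_z).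

(** Degree of a (smooth) map f : S^2 x S^1 -> S^3, as in the paper:
    deg f = int_{S^2 x S^1} f^* omega_S3, computed in the chart above. *)
Definition degree_S2S1_S3 (f : quat -> quat -> quat) : R :=
  RInt (fun th =>
    RInt (fun ph =>
      RInt (fun t => pullback_density f th ph t) 0 (2 * PI)) 0 (2 * PI)) 0 PI.

(** Conjugation fixes the reals and [u^-1 i u = x], so the map sends
    [(x, cos t + i sin t)] to [cos t + x sin t].  Every point of [S^3]
    other than [±1] thus has exactly the two preimages [(x, z)] and
    [(-x, conj z)]; in spherical coordinates the pullback of [omega_S3]
    has density [sin^2 t sin th / (2 pi^2)], which integrates to [2]. *)

From Stdlib Require Import Reals Lra Nsatz FunctionalExtensionality.
From Coquelicot Require Import Coquelicot.
Open Scope R_scope.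

(* [z = a + b i] becomes [a + b x] when [x] is purely imaginary. *)
Definition subst_i (x z : quat) : quat :=
  Q (q0 z) (q1 z * q1 x) (q1 z * q2 x) (q1 z * q3 x).

Lemma cos_sin_sqr_sum (x : R) : cos x * cos x + sin x * sin x = 1.
Proof. generalize (sin2_cos2 x); unfold Rsqr; lra. Qed.

Lemma conjugate_complex_subst_i (u z : quat) : qnorm2 u <> 0 -> q2 z = 0 -> q3 z = 0 ->
  qmul (qinv u) (qmul z u) = subst_i (qmul (qinv u) (qmul qi u)) z.
Proof.
intros Hu Hz2 Hz3.
destruct u as [a b c d], z as [e f g h]; simpl in *; subst.
unfold qnorm2 in Hu; simpl in Hu.
unfold subst_i, qinv, qnorm2, qmul, qscale, qconj, qi; simpl.
f_equal; field; exact Hu.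
Qed.

Lemma S2_conj_qi (x : quat) :
  in_S2 x -> exists u, in_S3 u /\ x = qmul (qinv u) (qmul qi u).
Proof.
intros [Hx0 Hx]. destruct x as [a b c d]; simpl in Hx0; subst a.
unfold qnorm2 in Hx; simpl in Hx.
destruct (Req_dec b (-1)) as [Hb | Hb].
- subst b. assert (c = 0 /\ d = 0) as [-> ->] by (split; nra).
  exists (Q 0 0 1 0). split; [unfold in_S3, qnorm2; simpl; ring |].
  unfold qinv, qnorm2, qmul, qscale, qconj, qi; simpl. f_equal; field.
- (* [u] is the normalisation of [1 - i x = (1 + b) + d j - c k]. *)
  assert (Hpos : 0 < 2 * (1 + b)) by nra.
  set (k := / sqrt (2 * (1 + b))).
  assert (Hk : k * k * (2 * (1 + b)) = 1).
  { unfold k. rewrite <- Rinv_mult, sqrt_sqrt by lra. field. lra. }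
  clearbody k. set (u := qscale k (Q (1 + b) 0 d (- c))).
  assert (Hu : qnorm2 u = 1).
  { unfold u, qnorm2; simpl.
    transitivity (k * k * (2 * (1 + b))); [clear -Hx; nsatz | exact Hk]. }
  exists u. split; [exact Hu |].
  unfold qinv. rewrite Hu, Rinv_1.
  unfold u, qmul, qscale, qconj, qi; simpl. clear Hu Hb Hpos.
  f_equal; match goal with |- ?v = _ =>
    transitivity (v * (k * k * (2 * (1 + b)))); [rewrite Hk; ring | clear Hk; nsatz]
  end.
Qed.

Lemma sph_in_S2 (th ph : R) : in_S2 (sph th ph).
Proof.
split; [reflexivity |]. unfold qnorm2, sph; simpl.
assert (h1 := cos_sin_sqr_sum th); assert (h2 := cos_sin_sqr_sum ph). nsatz.
Qed.

Lemma circ_in_S1 (t : R) : in_S1 (circ t).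
Proof.
split; [reflexivity | split; [reflexivity |]]. unfold qnorm2, circ; simpl.
assert (h := cos_sin_sqr_sum t). nsatz.
Qed.

Lemma pullback_density_ext (f g : quat -> quat -> quat) (th ph t : R) :
  (forall a b c, f (sph a b) (circ c) = g (sph a b) (circ c)) ->
  pullback_density f th ph t = pullback_density g th ph t.
Proof.
intros Hfg. unfold pullback_density; cbv beta zeta.
rewrite (functional_extensionality (fun s => f (sph s ph) (circ t))
                                   (fun s => g (sph s ph) (circ t))) by (intro; apply Hfg).
rewrite (functional_extensionality (fun s => f (sph th s) (circ t))
                                   (fun s => g (sph th s) (circ t))) by (intro; apply Hfg).
rewrite (functional_extensionality (fun s => f (sph th ph) (circ s))
                                   (fun s => g (sph th ph) (circ s))) by (intro; apply Hfg).
now rewrite Hfg.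
Qed.

Ltac solve_qderive :=
  unfold qderive, subst_i, sph, circ; simpl;
  f_equal; apply is_derive_unique; auto_derive; auto; ring.

Lemma qderive_sph_th (th ph : R) :
  qderive (fun s => sph s ph) th = Q 0 (- sin th) (cos th * cos ph) (cos th * sin ph).
Proof. solve_qderive. Qed.

Lemma qderive_sph_ph (th ph : R) :
  qderive (fun s => sph th s) ph = Q 0 0 (- (sin th * sin ph)) (sin th * cos ph).
Proof. solve_qderive. Qed.

Lemma qderive_circ (t : R) : qderive circ t = Q (- sin t) (cos t) 0 0.
Proof. solve_qderive. Qed.

Lemma qderive_subst_i_th (th ph t : R) :
  qderive (fun s => subst_i (sph s ph) (circ t)) th =
  Q 0 (- (sin t * sin th)) (sin t * (cos th * cos ph)) (sin t * (cos th * sin ph)).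
Proof. solve_qderive. Qed.

Lemma qderive_subst_i_ph (th ph t : R) :
  qderive (fun s => subst_i (sph th s) (circ t)) ph =
  Q 0 0 (sin t * (- (sin th * sin ph))) (sin t * (sin th * cos ph)).
Proof. solve_qderive. Qed.

Lemma qderive_subst_i_t (th ph t : R) :
  qderive (fun s => subst_i (sph th ph) (circ s)) t =
  Q (- sin t) (cos t * cos th) (cos t * (sin th * cos ph)) (cos t * (sin th * sin ph)).
Proof. solve_qderive. Qed.

(* Stated for abstract points of the unit circle: with [cos]/[sin] as
   atoms, [nsatz] does not terminate on these identities. *)
Lemma omega_S1_circle (c s : R) : c * c + s * s = 1 ->
  omega_S1 (Q c s 0 0) (Q (- s) c 0 0) = / (2 * PI).
Proof.
intros Hcs. assert (PI <> 0) by (generalize PI_RGT_0; lra).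
unfold omega_S1, qinv, qRe, qopp, qmul, qscale, qconj, qnorm2, qi; simpl.
replace (c * c + s * s + 0 * 0 + 0 * 0) with 1 by lra. rewrite Rinv_1.
match goal with |- _ * ?P = _ => replace P with 1 by (clear H; nsatz) end. ring.
Qed.

Lemma omega_S2_sphere (cth sth cph sph : R) :
  cth * cth + sth * sth = 1 -> cph * cph + sph * sph = 1 ->
  omega_S2 (Q 0 cth (sth * cph) (sth * sph)) (Q 0 (- sth) (cth * cph) (cth * sph))
    (Q 0 0 (- (sth * sph)) (sth * cph)) = sth / (4 * PI).
Proof.
intros Hth Hph. assert (PI <> 0) by (generalize PI_RGT_0; lra).
unfold omega_S2, qRe, qadd, qopp, qmul, qscale; simpl.
match goal with |- _ * ?P = _ => replace P with (-2 * sth) by (clear H; nsatz) end.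
field; auto.
Qed.

Lemma omega_S3_subst_i (ct st cth sth cph sph : R) :
  ct * ct + st * st = 1 -> cth * cth + sth * sth = 1 -> cph * cph + sph * sph = 1 ->
  omega_S3 (Q ct (st * cth) (st * (sth * cph)) (st * (sth * sph)))
    (Q 0 (- (st * sth)) (st * (cth * cph)) (st * (cth * sph)))
    (Q 0 0 (st * (- (sth * sph))) (st * (sth * cph)))
    (Q (- st) (ct * cth) (ct * (sth * cph)) (ct * (sth * sph)))
  = st * st * sth / (2 * PI ^ 2).
Proof.
intros Ht Hth Hph.
assert (Hn : qnorm2 (Q ct (st * cth) (st * (sth * cph)) (st * (sth * sph))) = 1).
{ unfold qnorm2; simpl. nsatz. }
unfold omega_S3, qinv. rewrite Hn, Rinv_1.
assert (PI <> 0) by (generalize PI_RGT_0; lra).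
unfold triple, qRe, qmul, qscale, qconj; simpl.
match goal with |- - / _ * ?P = _ =>
  replace P with (-6 * (st * st * sth)) by (clear Hn H; nsatz) end.
field; auto.
Qed.

Lemma pullback_density_subst_i (th ph t : R) : 0 < th < PI ->
  pullback_density subst_i th ph t = sin t * sin t * sin th / (2 * PI ^ 2).
Proof.
intros Hth. unfold pullback_density; cbv zeta.
rewrite qderive_subst_i_th, qderive_subst_i_ph, qderive_subst_i_t,
  qderive_sph_th, qderive_sph_ph, qderive_circ.
change (subst_i (sph th ph) (circ t)) with
  (Q (cos t) (sin t * cos th) (sin t * (sin th * cos ph)) (sin t * (sin th * sin ph))).
unfold sph, circ.
rewrite omega_S3_subst_i, omega_S2_sphere, omega_S1_circle by apply cos_sin_sqr_sum.
assert (Hsin : 0 < sin th) by (apply sin_gt_0; lra).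
assert (HPI := PI_RGT_0).
unfold sgnR. destruct (Rlt_dec 0 (sin th / (4 * PI) * / (2 * PI))) as [_ | Hneg]; [ring |].
exfalso; apply Hneg, Rmult_lt_0_compat;
  [apply Rdiv_lt_0_compat | apply Rinv_0_lt_compat]; lra.
Qed.

Lemma RInt_sin_sqr_scal (C : R) : RInt (fun t => sin t * sin t * C) 0 (2 * PI) = PI * C.
Proof.
apply is_RInt_unique.
set (G := fun t => (t - sin t * cos t) / 2 * C).
replace (PI * C) with (minus (G (2 * PI)) (G 0)).
2:{ unfold G, minus, plus, opp; simpl. rewrite sin_2PI, cos_2PI, sin_0, cos_0. field. }
apply (is_RInt_derive (V := R_CompleteNormedModule) G (fun t => sin t * sin t * C)).
- intros x _. unfold G. auto_derive; auto.
  assert (Hx := cos_sin_sqr_sum x). rewrite <- Hx at 1. field.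
- intros x _. apply (ex_derive_continuous (fun t => sin t * sin t * C)). auto_derive; auto.
Qed.

Lemma RInt_sin_0_PI : RInt sin 0 PI = 2.
Proof.
apply is_RInt_unique.
replace 2 with (minus (- cos PI) (- cos 0))
  by (unfold minus, plus, opp; simpl; rewrite cos_PI, cos_0; ring).
apply (is_RInt_derive (V := R_CompleteNormedModule) (fun x => - cos x) sin).
- intros x _. auto_derive; auto; ring.
- intros x _. apply (ex_derive_continuous sin). auto_derive; auto.
Qed.

Theorem lemma10 :
  forall frq : quat -> quat -> quat,
    (forall x z u : quat,
        in_S2 x -> in_S1 z -> in_S3 u ->
        x = qmul (qinv u) (qmul qi u) ->
        frq x z = qmul (qinv u) (qmul z u)) ->
    degree_S2S1_S3 frq = 2.
Proof.
intros frq Hfrq.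
assert (Hchart : forall a b c, frq (sph a b) (circ c) = subst_i (sph a b) (circ c)).
{ intros a b c. destruct (S2_conj_qi _ (sph_in_S2 a b)) as [u [Hu Hx]].
  destruct (circ_in_S1 c) as [Hz2 [Hz3 _]].
  rewrite (Hfrq _ _ u (sph_in_S2 a b) (circ_in_S1 c) Hu Hx), Hx.
  apply conjugate_complex_subst_i; [rewrite Hu; exact R1_neq_R0 | exact Hz2 | exact Hz3]. }
assert (HPI := PI_RGT_0).
unfold degree_S2S1_S3. transitivity (RInt sin 0 PI); [| exact RInt_sin_0_PI].
apply RInt_ext. intros th Hth. rewrite Rmin_left, Rmax_right in Hth by lra.
rewrite (RInt_ext _ (fun _ => PI * (sin th / (2 * PI ^ 2)))).
- rewrite RInt_const. unfold scal; simpl; unfold mult; simpl. field. lra.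
- intros ph _. rewrite <- RInt_sin_sqr_scal. apply RInt_ext. intros t _.
  rewrite (pullback_density_ext _ _ _ _ _ Hchart), pullback_density_subst_i by lra.
  symmetry; apply Rmult_div_assoc.
Qed.
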